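(* Let $R_0^*\in SO(3)$ with unit quaternion representation $w_0^*$, and let $(y_i,x_i)$ satisfy $y_i=R_0^*x_i+\epsilon_i$ with $\epsilon_i\in\mathbb{R}^3$. Then for every $R_0\in SO(3)$ with unit quaternion representation $w_0$, $\|y_i-R_0x_i\|_2^2=w_0^\top Q_iw_0$, and $Q_i=P_i+E_i+\|\epsilon_i\|_2^2I_4$ for symmetric $4\times4$ matrices $P_i,E_i$ with the following properties: (a) $P_i$ is positive semidefinite with eigenvalues $4\|x_i\|_2^2,4\|x_i\|_2^2,0,0$ (with multiplicity), and $P_iw_0^*=0$; in particular $Q_iw_0^*=P_iw_0^*=0$ in the noiseless case $\epsilon_i=0$; (b) $E_i$ has eigenvalues $2\epsilon_i^\top R_0^*x_i+2\|\epsilon_i\|_2\|x_i\|_2$ and $2\epsilon_i^\top R_0^*x_i-2\|\epsilon_i\|_2\|x_i\|_2$, each of multiplicity $2$; for every $R_0\in SO(3)$ with unit quaternion representation $w_0$ we have $w_0^\top E_iw_0=2\epsilon_i^\top(R_0^*x_i-R_0x_i)$, and in particular $(w_0^* )^\top E_iw_0^*=0$.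
   Context: For $w=[w_1;w_2;w_3;w_4]\in\mathbb{S}^3$, $R(w)=\begin{bmatrix} w_1^2+w_2^2-w_3^2-w_4^2 & 2(w_2w_3-w_1w_4) & 2(w_2w_4+w_1w_3)\\ 2(w_2w_3+w_1w_4) & w_1^2+w_3^2-w_2^2-w_4^2 & 2(w_3w_4-w_1w_2)\\ 2(w_2w_4-w_1w_3) & 2(w_3w_4+w_1w_2) & w_1^2+w_4^2-w_2^2-w_3^2\end{bmatrix}\in SO(3)$; every rotation equals $R(w)$ for exactly two $w=\pm w$, its unit quaternion representations. $Q_i$ is the unique symmetric $4\times4$ matrix with $w^\top Q_iw=\|y_i-R(w)x_i\|_2^2$ for all $w\in\mathbb{S}^3$. *)

From mathcomp Require Import all_boot all_order all_algebra.
From mathcomp Require Import reals.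
Set Implicit Arguments. Unset Strict Implicit. Unset Printing Implicit Defensive.
Import Order.TTheory GRing.Theory Num.Theory.
Local Open Scope ring_scope.

Section Defs.
Variable R : realType.

Definition dotv n (u v : 'cV[R]_n) : R := \sum_(i < n) u i 0 * v i 0.
Definition norm2 n (v : 'cV[R]_n) : R := Num.sqrt (dotv v v).

Definition quadf n (Q : 'M[R]_n) (w : 'cV[R]_n) : R := (w^T *m Q *m w) 0 0.

Definition unitq (w : 'cV[R]_4) : Prop := norm2 w = 1.

Definition psd n (P : 'M[R]_n) : Prop := forall v : 'cV[R]_n, 0 <= quadf P v.

(* quaternion components w_1..w_4 are entries 0..3 *)
Definition rotq (w : 'cV[R]_4) : 'M[R]_3 :=
  let w1 := w 0 0 in
  let w2 := w 1 0 in
  let w3 := w 2%:R 0 in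
  let w4 := w 3%:R 0 in
  \matrix_(i < 3, j < 3)
   [fun k : 'I_3 * 'I_3 =>
      match (val k.1, val k.2) with
      | (0, 0)%N => w1^+2 + w2^+2 - w3^+2 - w4^+2
      | (0, 1)%N => 2 * (w2 * w3 - w1 * w4)
      | (0, 2)%N => 2 * (w2 * w4 + w1 * w3)
      | (1, 0)%N => 2 * (w2 * w3 + w1 * w4)
      | (1, 1)%N => w1^+2 + w3^+2 - w2^+2 - w4^+2
      | (1, 2)%N => 2 * (w3 * w4 - w1 * w2)
      | (2, 0)%N => 2 * (w2 * w4 - w1 * w3)
      | (2, 1)%N => 2 * (w3 * w4 + w1 * w2)
      | _ => w1^+2 + w4^+2 - w2^+2 - w3^+2
      end] (i, j).

End Defs.

From mathcomp Require Import all_boot all_order all_algebra.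
From mathcomp Require Import reals ring lra.
Import Order.TTheory GRing.Theory Num.Theory.
Local Open Scope ring_scope.
Set Implicit Arguments. Unset Strict Implicit. Unset Printing Implicit Defensive.

(* On the unit sphere [|y - R(w) x|^2] is a quadratic form in [w], and a symmetric
   matrix is determined by its quadratic form on the sphere.  With [y = R(a) x + eps]
   and [d = R(a) x - R(w) x], expanding [|d + eps|^2 = |d|^2 + 2 eps.d + |eps|^2]
   splits [Q] into [P + E + |eps|^2 I], where [w^T P w = |R(a) x - R(w) x|^2] and
   [w^T E w = 2 eps.d].  If [L] is the orthogonal matrix of [w |-> conj(a) w], then
   [P = L^T N L] with [w^T N w = 4 |Im(w) \times x|^2]: so [P] is positive semidefinite,
   has the spectrum [4|x|^2, 4|x|^2, 0, 0] of [N], and kills [a] because [L a = e_1].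
   The spectrum of [E] is read off its characteristic polynomial, computed by
   expanding a [4 x 4] determinant. *)

Lemma sumr_ord3 (V : nmodType) (F : 'I_3 -> V) :
  \sum_(i < 3) F i = F 0 + F 1 + F 2%:R.
Proof.
rewrite !big_ord_recl big_ord0 addr0 !addrA.
by congr (_ + _ + _); congr F; apply/val_inj.
Qed.

Lemma sumr_ord4 (V : nmodType) (F : 'I_4 -> V) :
  \sum_(i < 4) F i = F 0 + F 1 + F 2%:R + F 3%:R.
Proof.
rewrite !big_ord_recl big_ord0 addr0 !addrA.
by congr (_ + _ + _ + _); congr F; apply/val_inj.
Qed.

Section EuclideanForms.
Variables (R : realType) (n : nat).
Implicit Types (u v z w : 'cV[R]_n) (A B : 'M[R]_n).

Lemma dotvC u v : dotv u v = dotv v u.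
Proof. by apply: eq_bigr => i _; rewrite mulrC. Qed.

Lemma dotvDl u v z : dotv (u + v) z = dotv u z + dotv v z.
Proof. by rewrite /dotv -big_split; apply: eq_bigr => i _; rewrite mxE mulrDl. Qed.

Lemma dotvDr u v z : dotv u (v + z) = dotv u v + dotv u z.
Proof. by rewrite !(dotvC u) dotvDl. Qed.

Lemma dotvD_sqr u v : dotv (u + v) (u + v) = dotv u u + 2 * dotv u v + dotv v v.
Proof. by rewrite dotvDl !dotvDr (dotvC v u); ring. Qed.

Lemma dotvNl u v : dotv (- u) v = - dotv u v.
Proof. by rewrite /dotv -sumrN; apply: eq_bigr => i _; rewrite mxE mulNr. Qed.

Lemma dotvBl u v z : dotv (u - v) z = dotv u z - dotv v z.
Proof. by rewrite dotvDl dotvNl. Qed.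

Lemma dotvBr u v z : dotv u (v - z) = dotv u v - dotv u z.
Proof. by rewrite !(dotvC u) dotvBl. Qed.

Lemma dotv0l v : dotv 0 v = 0.
Proof. by rewrite /dotv big1 // => i _; rewrite mxE mul0r. Qed.

Lemma dotv_ge0 u : 0 <= dotv u u.
Proof. by apply: sumr_ge0 => i _; rewrite -expr2 sqr_ge0. Qed.

Lemma norm2_sqr u : norm2 u ^+ 2 = dotv u u.
Proof. by rewrite sqr_sqrtr // dotv_ge0. Qed.

Lemma quadf_sum A w : quadf A w = \sum_i \sum_j w i 0 * A i j * w j 0.
Proof.
rewrite /quadf mxE; under eq_bigr => j _ do rewrite mxE big_distrl /=.
rewrite exchange_big; apply: eq_bigr => i _; apply: eq_bigr => j _.
by rewrite !mxE.
Qed.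

Lemma quadfD A B w : quadf (A + B) w = quadf A w + quadf B w.
Proof. by rewrite /quadf mulmxDr mulmxDl mxE. Qed.

Lemma quadfN A w : quadf (- A) w = - quadf A w.
Proof. by rewrite /quadf mulmxN mulNmx mxE. Qed.

Lemma quadfB A B w : quadf (A - B) w = quadf A w - quadf B w.
Proof. by rewrite quadfD quadfN. Qed.

Lemma quadfZ c A w : quadf (c *: A) w = c * quadf A w.
Proof. by rewrite /quadf -scalemxAr -scalemxAl mxE. Qed.

Lemma quadf_scalar c w : quadf c%:M w = c * dotv w w.
Proof.
rewrite /quadf mul_mx_scalar -scalemxAl mxE /dotv mxE.
by congr (_ * _); apply: eq_bigr => i _; rewrite mxE.
Qed.

Lemma quadf_conj A B w : quadf (A^T *m B *m A) w = quadf B (A *m w).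
Proof. by rewrite /quadf trmx_mul !mulmxA. Qed.

Lemma psd_conj A B : psd B -> psd (A^T *m B *m A).
Proof. by move=> psdB v; rewrite quadf_conj. Qed.

Lemma quadf_delta2 A (i j : 'I_n) a b :
  quadf A (a *: delta_mx i 0 + b *: delta_mx j 0) =
  a ^+ 2 * A i i + a * b * (A i j + A j i) + b ^+ 2 * A j j.
Proof.
rewrite /quadf [(_ + _)^T]linearD /= ![(_ *: _)^T]linearZ /= !trmx_delta.
by rewrite !mulmxDl !mulmxDr -!scalemxAr -!scalemxAl -!rowE -!colE !mxE; ring.
Qed.

Lemma sym_quadf_sphere_eq0 A : A^T = A ->
  (forall w, dotv w w = 1 -> quadf A w = 0) -> A = 0.
Proof.
move=> symA A0.
have unit_delta2 (i j : 'I_n) (a b : R) :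
    (if i == j then (a + b) ^+ 2 else a ^+ 2 + b ^+ 2) = 1 ->
    dotv (a *: delta_mx i 0 + b *: delta_mx j 0) (a *: delta_mx i 0 + b *: delta_mx j 0) = 1.
  rewrite -[dotv _ _]mul1r -quadf_scalar quadf_delta2 !mxE !eqxx.
  by case: eqVneq => _ /= h; apply: etrans h; ring.
have Aii i : A i i = 0.
  have := unit_delta2 i i 1 0; rewrite eqxx addr0 expr1n => /(_ erefl) /A0.
  by rewrite quadf_delta2 => h; rewrite -[RHS]h; ring.
apply/matrixP => i j; rewrite mxE.
have [<- // | ij] := eqVneq i j.
have Aji : A j i = A i j by rewrite -{1}symA mxE.
(* [(3/5, 4/5)] is a rational point of the unit circle, so no square roots are needed. *)
have := unit_delta2 i j (3 / 5) (4 / 5); rewrite (negbTE ij).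
have -> : (3 / 5 : R) ^+ 2 + (4 / 5) ^+ 2 = 1 by field.
by move=> /(_ erefl) /A0; rewrite quadf_delta2 !Aii Aji; lra.
Qed.
End EuclideanForms.

Section Determinants.
Variable T : comNzRingType.
Implicit Type g : nat -> nat -> T.

(* Entries are indexed by [nat] so that the expansions below reduce every index to a
   literal, which lets [ring] identify equal entries. *)

Lemma det_nat_mx_expand n g :
  \det (\matrix_(i < n.+1, j < n.+1) g i j) =
  \sum_(j < n.+1) (-1) ^+ j * g 0%N j * \det (\matrix_(i < n, k < n) g i.+1 (bump j k)).
Proof.
rewrite (expand_det_row _ 0); apply: eq_bigr => j _.
rewrite /cofactor mxE mulrCA mulrA; congr (_ * _ * \det _).
by apply/matrixP => i k; rewrite !mxE.
Qed.

Lemma det_mx22 g : \det (\matrix_(i < 2, j < 2) g i j) = g 0 0 * g 1 1 - g 0 1 * g 1 0.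
Proof.
by rewrite det_nat_mx_expand !big_ord_recl big_ord0 !det_mx11 !mxE /bump /=; ring.
Qed.

Lemma det_mx33 g : \det (\matrix_(i < 3, j < 3) g i j) =
    g 0 0 * (g 1 1 * g 2 2 - g 1 2 * g 2 1)
  - g 0 1 * (g 1 0 * g 2 2 - g 1 2 * g 2 0)
  + g 0 2 * (g 1 0 * g 2 1 - g 1 1 * g 2 0).
Proof.
rewrite det_nat_mx_expand.
under eq_bigr => j _ do rewrite (det_mx22 (fun i k => g i.+1 (bump j k))).
by rewrite !big_ord_recl big_ord0 /bump /=; ring.
Qed.

Lemma det_mx44 g :
  \det (\matrix_(i < 4, j < 4) g i j) =
    g 0 0 * (g 1 1 * (g 2 2 * g 3 3 - g 2 3 * g 3 2) - g 1 2 * (g 2 1 * g 3 3 - g 2 3 * g 3 1)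
             + g 1 3 * (g 2 1 * g 3 2 - g 2 2 * g 3 1))
  - g 0 1 * (g 1 0 * (g 2 2 * g 3 3 - g 2 3 * g 3 2) - g 1 2 * (g 2 0 * g 3 3 - g 2 3 * g 3 0)
             + g 1 3 * (g 2 0 * g 3 2 - g 2 2 * g 3 0))
  + g 0 2 * (g 1 0 * (g 2 1 * g 3 3 - g 2 3 * g 3 1) - g 1 1 * (g 2 0 * g 3 3 - g 2 3 * g 3 0)
             + g 1 3 * (g 2 0 * g 3 1 - g 2 1 * g 3 0))
  - g 0 3 * (g 1 0 * (g 2 1 * g 3 2 - g 2 2 * g 3 1) - g 1 1 * (g 2 0 * g 3 2 - g 2 2 * g 3 0)
             + g 1 2 * (g 2 0 * g 3 1 - g 2 1 * g 3 0)).
Proof.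
rewrite det_nat_mx_expand.
under eq_bigr => j _ do rewrite (det_mx33 (fun i k => g i.+1 (bump j k))).
by rewrite !big_ord_recl big_ord0 /bump /=; ring.
Qed.

Lemma char_poly_nat_mx n (f : nat -> nat -> T) :
  char_poly (\matrix_(i < n, j < n) f i j) =
  \det (\matrix_(i < n, j < n) ('X *+ (i == j)%N - (f i j)%:P)).
Proof. by congr (\det _); apply/matrixP => i j; rewrite !mxE. Qed.

Lemma char_poly_orthogonal_conj n (L A : 'M[T]_n) :
  L^T *m L = 1%:M -> char_poly (L^T *m A *m L) = char_poly A.
Proof.
move=> LTL; set pL := map_mx polyC L.
have pLTL : pL^T *m pL = 1%:M by rewrite map_trmx -map_mxM LTL map_mx1.
have X_conj : ('X%:M : 'M[{poly T}]_n) = pL^T *m 'X%:M *m pL.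
  by rewrite mul_mx_scalar -scalemxAl pLTL scalemx1.
rewrite /char_poly /char_poly_mx !map_mxM -map_trmx -/pL {1}X_conj -mulmxBl -mulmxBr.
by rewrite !det_mulmx mulrAC -det_mulmx pLTL det1 mul1r.
Qed.

End Determinants.

Section QuaternionForms.
Variable R : realType.
Implicit Types (a w : 'cV[R]_4) (x y e : 'cV[R]_3).

Lemma dotv3E x y : dotv x y = x 0 0 * y 0 0 + x 1 0 * y 1 0 + x 2%:R 0 * y 2%:R 0.
Proof. exact: sumr_ord3. Qed.

Lemma dotv4E a w :
  dotv a w = a 0 0 * w 0 0 + a 1 0 * w 1 0 + a 2%:R 0 * w 2%:R 0 + a 3%:R 0 * w 3%:R 0.
Proof. exact: sumr_ord4. Qed.

Lemma unitqP w : unitq w <-> dotv w w = 1.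
Proof.
split => [w1 | w1]; first by rewrite -norm2_sqr w1 expr1n.
by rewrite /unitq /norm2 w1 sqrtr1.
Qed.

Lemma sym_quadf_unitq_inj (Q1 Q2 : 'M[R]_4) : Q1^T = Q1 -> Q2^T = Q2 ->
  (forall w, unitq w -> quadf Q1 w = quadf Q2 w) -> Q1 = Q2.
Proof.
move=> sym1 sym2 eq12; apply/subr0_eq.
apply: sym_quadf_sphere_eq0 => [|w /unitqP w1]; first by rewrite linearB /= sym1 sym2.
by rewrite quadfB eq12 // subrr.
Qed.

Lemma dotv_rotq w x :
  dotv (rotq w *m x) (rotq w *m x) = dotv w w ^+ 2 * dotv x x.
Proof. rewrite !dotv3E dotv4E !mxE !sumr_ord3 !mxE /=; ring. Qed.

Definition rot_form_entry y x (i j : nat) : R :=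
  let x1 := x 0 0 in let x2 := x 1 0 in let x3 := x 2%:R 0 in
  let y1 := y 0 0 in let y2 := y 1 0 in let y3 := y 2%:R 0 in
  match (i, j) with
  | (0, 0)%N => x1 * y1 + x2 * y2 + x3 * y3
  | (0, 1)%N | (1, 0)%N => x2 * y3 - x3 * y2
  | (0, 2)%N | (2, 0)%N => x3 * y1 - x1 * y3
  | (0, 3)%N | (3, 0)%N => x1 * y2 - x2 * y1
  | (1, 1)%N => x1 * y1 - x2 * y2 - x3 * y3
  | (1, 2)%N | (2, 1)%N => x2 * y1 + x1 * y2
  | (1, 3)%N | (3, 1)%N => x3 * y1 + x1 * y3
  | (2, 2)%N => x2 * y2 - x1 * y1 - x3 * y3
  | (2, 3)%N | (3, 2)%N => x3 * y2 + x2 * y3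
  | _ => x3 * y3 - x1 * y1 - x2 * y2
  end.

Definition rot_form y x : 'M[R]_4 := \matrix_(i < 4, j < 4) rot_form_entry y x i j.

Lemma quadf_rot_form y x w : quadf (rot_form y x) w = dotv y (rotq w *m x).
Proof. rewrite quadf_sum !sumr_ord4 dotv3E !mxE !sumr_ord3 !mxE /rot_form_entry /=; ring. Qed.

Lemma rot_form_sym y x : (rot_form y x)^T = rot_form y x.
Proof.
by apply/matrixP => i j; rewrite !mxE; case: i j => [[|[|[|[|?]]]] ?] [[|[|[|[|?]]]] ?].
Qed.

Definition noise_mx a e x : 'M[R]_4 :=
  (2 * dotv e (rotq a *m x))%:M - 2 *: rot_form e x.

Lemma noise_mx_sym a e x : (noise_mx a e x)^T = noise_mx a e x.
Proof. by rewrite linearB /= tr_scalar_mx linearZ /= rot_form_sym. Qed.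

Lemma quadf_noise_mx a e x w : unitq w ->
  quadf (noise_mx a e x) w = 2 * dotv e (rotq a *m x - rotq w *m x).
Proof.
move=> /unitqP w1.
by rewrite quadfB quadf_scalar quadfZ quadf_rot_form w1 dotvBr; ring.
Qed.

Lemma char_poly_scalar_sub_rot_form c e x :
  char_poly (c%:M - 2 *: rot_form e x) =
  (('X - c%:P) ^+ 2 - (4 * dotv e e * dotv x x)%:P) ^+ 2.
Proof.
pose f i j := c *+ (i == j)%N - 2 * rot_form_entry e x i j.
have -> : c%:M - 2 *: rot_form e x = \matrix_(i < 4, j < 4) f i j.
  by apply/matrixP => i j; rewrite !mxE.
rewrite char_poly_nat_mx (det_mx44 (fun i j => 'X *+ (i == j)%N - (f i j)%:P)).
by rewrite /f /rot_form_entry /= !dotv3E; ring.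
Qed.

Lemma char_poly_noise_mx a e x : char_poly (noise_mx a e x) =
  ('X - (2 * dotv e (rotq a *m x) + 2 * norm2 e * norm2 x)%:P) ^+ 2 *
  ('X - (2 * dotv e (rotq a *m x) - 2 * norm2 e * norm2 x)%:P) ^+ 2.
Proof. by rewrite char_poly_scalar_sub_rot_form -!norm2_sqr; ring. Qed.

Lemma noise_mx0 a x : noise_mx a 0 x = 0.
Proof.
apply: sym_quadf_unitq_inj => [||w w1]; [exact: noise_mx_sym | exact: trmx0 |].
by rewrite quadf_noise_mx // dotv0l mulr0 /quadf mulmx0 mul0mx mxE.
Qed.

(* The matrix of [w |-> conj(a) w], quaternions [w] having coordinates
   [w_1 + w_2 i + w_3 j + w_4 k]. *)
Definition lmul_qconj_mx a : 'M[R]_4 :=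
  let a1 := a 0 0 in let a2 := a 1 0 in let a3 := a 2%:R 0 in let a4 := a 3%:R 0 in
  \matrix_(i < 4, j < 4)
   match (nat_of_ord i, nat_of_ord j) with
   | (0, 0)%N | (1, 1)%N | (2, 2)%N | (3, 3)%N => a1
   | (0, 1)%N | (2, 3)%N => a2
   | (1, 0)%N | (3, 2)%N => - a2
   | (0, 2)%N | (3, 1)%N => a3
   | (2, 0)%N | (1, 3)%N => - a3
   | (0, 3)%N | (1, 2)%N => a4
   | _ => - a4
   end.

Lemma lmul_qconj_mx_orthogonal a :
  (lmul_qconj_mx a)^T *m lmul_qconj_mx a = (dotv a a)%:M.
Proof.
apply/matrixP => i j; rewrite !mxE sumr_ord4 !mxE dotv4E.
by case: i j => [[|[|[|[|?]]]] ?] [[|[|[|[|?]]]] ?] //=; ring.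
Qed.

Lemma lmul_qconj_mx_self a : lmul_qconj_mx a *m a = dotv a a *: delta_mx 0 0.
Proof.
apply/matrixP => i j; rewrite (ord1 j) !mxE sumr_ord4 !mxE dotv4E.
by case: i => [[|[|[|[|?]]]] ?] //=; ring.
Qed.

Definition im_cross_entry x (i j : nat) : R :=
  let x1 := x 0 0 in let x2 := x 1 0 in let x3 := x 2%:R 0 in
  match (i, j) with
  | (0, _)%N | (_, 0)%N => 0
  | (1, 1)%N => 4 * (x2 ^+ 2 + x3 ^+ 2)
  | (2, 2)%N => 4 * (x1 ^+ 2 + x3 ^+ 2)
  | (3, 3)%N => 4 * (x1 ^+ 2 + x2 ^+ 2)
  | (1, 2)%N | (2, 1)%N => - 4 * x1 * x2
  | (1, 3)%N | (3, 1)%N => - 4 * x1 * x3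
  | _ => - 4 * x2 * x3
  end.

Definition im_cross_mx x : 'M[R]_4 := \matrix_(i < 4, j < 4) im_cross_entry x i j.

Lemma im_cross_mx_sym x : (im_cross_mx x)^T = im_cross_mx x.
Proof.
by apply/matrixP => i j; rewrite !mxE; case: i j => [[|[|[|[|?]]]] ?] [[|[|[|[|?]]]] ?].
Qed.

Lemma quadf_im_cross_mx x w : quadf (im_cross_mx x) w = 4 *
   ((w 2%:R 0 * x 2%:R 0 - w 3%:R 0 * x 1 0) ^+ 2 + (w 3%:R 0 * x 0 0 - w 1 0 * x 2%:R 0) ^+ 2
    + (w 1 0 * x 1 0 - w 2%:R 0 * x 0 0) ^+ 2).
Proof. by rewrite quadf_sum !sumr_ord4 !mxE /im_cross_entry /=; ring. Qed.

Lemma im_cross_mx_psd x : psd (im_cross_mx x).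
Proof. by move=> w; rewrite quadf_im_cross_mx mulr_ge0 // !addr_ge0 // sqr_ge0. Qed.

Lemma im_cross_mx_col0 x : im_cross_mx x *m delta_mx 0 0 = 0 :> 'cV_4.
Proof.
by rewrite -colE; apply/matrixP => i j; rewrite !mxE; case: i => [[|[|[|[|?]]]] ?].
Qed.

Lemma char_poly_im_cross_mx x :
  char_poly (im_cross_mx x) = ('X - (4 * dotv x x)%:P) ^+ 2 * 'X ^+ 2.
Proof.
rewrite char_poly_nat_mx (det_mx44 (fun i j => 'X *+ (i == j)%N - (im_cross_entry x i j)%:P)).
by rewrite /im_cross_entry /= dotv3E; ring.
Qed.

Definition signal_mx a x : 'M[R]_4 :=
  (lmul_qconj_mx a)^T *m im_cross_mx x *m lmul_qconj_mx a.

Lemma quadf_signal_mx a x w : quadf (signal_mx a x) w =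
  2 * dotv a a * dotv x x * dotv w w - 2 * dotv (rotq a *m x) (rotq w *m x).
Proof.
rewrite quadf_conj quadf_im_cross_mx !dotv3E !dotv4E.
by rewrite !mxE !sumr_ord4 !sumr_ord3 !mxE /=; ring.
Qed.

Lemma quadf_signal_mx_unit a x w : unitq a -> unitq w ->
  quadf (signal_mx a x) w = norm2 (rotq a *m x - rotq w *m x) ^+ 2.
Proof.
move=> /unitqP a1 /unitqP w1.
rewrite quadf_signal_mx norm2_sqr dotvBl !dotvBr !dotv_rotq a1 w1.
by rewrite (dotvC (rotq w *m x)); ring.
Qed.

Lemma signal_mx_sym a x : (signal_mx a x)^T = signal_mx a x.
Proof. by rewrite /signal_mx !trmx_mul trmxK im_cross_mx_sym mulmxA. Qed.

Lemma signal_mx_psd a x : psd (signal_mx a x).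
Proof. exact/psd_conj/im_cross_mx_psd. Qed.

Lemma signal_mx_kernel a x : signal_mx a x *m a = 0.
Proof.
by rewrite /signal_mx -!mulmxA lmul_qconj_mx_self -scalemxAr im_cross_mx_col0 scaler0 !mulmx0.
Qed.

Lemma char_poly_signal_mx a x : unitq a ->
  char_poly (signal_mx a x) = ('X - (4 * dotv x x)%:P) ^+ 2 * 'X ^+ 2.
Proof.
move=> /unitqP a1.
by rewrite char_poly_orthogonal_conj ?char_poly_im_cross_mx // lmul_qconj_mx_orthogonal a1.
Qed.

Lemma sym_quadf_rot_decomp a x e Q : unitq a -> Q^T = Q ->
    (forall w, unitq w -> quadf Q w = norm2 (rotq a *m x + e - rotq w *m x) ^+ 2) ->
  Q = signal_mx a x + noise_mx a e x + (norm2 e ^+ 2)%:M.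
Proof.
move=> a1 symQ costQ; apply: sym_quadf_unitq_inj => // [|w w1].
  by rewrite linearD /= linearD /= signal_mx_sym noise_mx_sym tr_scalar_mx.
rewrite costQ // 2!quadfD quadf_signal_mx_unit // quadf_noise_mx // quadf_scalar.
rewrite addrAC; set d := rotq a *m x - rotq w *m x.
by have /unitqP -> := w1; rewrite !norm2_sqr dotvD_sqr (dotvC e d); ring.
Qed.

End QuaternionForms.

Theorem lemma3p5 (R : realType) (w0s : 'cV[R]_4) (x y eps : 'cV[R]_3)
    (Q : 'M[R]_4) :
  unitq w0s ->
  y = rotq w0s *m x + eps ->
  Q^T = Q ->
  (forall w : 'cV[R]_4, unitq w -> quadf Q w = norm2 (y - rotq w *m x) ^+ 2) ->
  (forall w0 : 'cV[R]_4, unitq w0 -> norm2 (y - rotq w0 *m x) ^+ 2 = quadf Q w0) /\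
  exists P E : 'M[R]_4,
    [/\ P^T = P, E^T = E & Q = P + E + (norm2 eps ^+ 2)%:M] /\
    (* (a) *)
    [/\ psd P,
        char_poly P = ('X - (4 * norm2 x ^+ 2)%:P) ^+ 2 * ('X - 0%:P) ^+ 2,
        P *m w0s = 0
      & (eps = 0 -> Q *m w0s = 0 /\ P *m w0s = 0)] /\
    (* (b) *)
    [/\ char_poly E =
          ('X - (2 * dotv eps (rotq w0s *m x) + 2 * norm2 eps * norm2 x)%:P) ^+ 2 *
          ('X - (2 * dotv eps (rotq w0s *m x) - 2 * norm2 eps * norm2 x)%:P) ^+ 2,
        (forall w0 : 'cV[R]_4, unitq w0 ->
           quadf E w0 = 2 * dotv eps (rotq w0s *m x - rotq w0 *m x))
      & quadf E w0s = 0].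
Proof.
move=> w0s1 hy symQ costQ.
split=> [w0 w01 | ]; first by rewrite costQ.
have Qdecomp : Q = signal_mx w0s x + noise_mx w0s eps x + (norm2 eps ^+ 2)%:M.
  by apply: sym_quadf_rot_decomp => // w w1; rewrite costQ // hy.
exists (signal_mx w0s x), (noise_mx w0s eps x).
split; first by split; [exact: signal_mx_sym | exact: noise_mx_sym | exact: Qdecomp].
split; first split.
- exact: signal_mx_psd.
- by rewrite char_poly_signal_mx // norm2_sqr polyC0 subr0.
- exact: signal_mx_kernel.
- move=> eps0; split; last exact: signal_mx_kernel.
  by rewrite Qdecomp eps0 noise_mx0 norm2_sqr dotv0l raddf0 !addr0 signal_mx_kernel.
split.
- exact: char_poly_noise_mx.
- by move=> w0 w01; rewrite quadf_noise_mx.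
- by rewrite quadf_noise_mx // subrr dotvC dotv0l mulr0.
Qed.
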